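(* None of the following formulae (with $p,q$ distinct atoms) is a theorem of $\mathsf{IELE}$: $(p\multimap q)\to\Box(p\to q)$ (the axiom $\mathsf{Box}$); $(p\to\Box q)\to(p\multimap q)$ (the axiom $\mathsf{Hug}$); $\neg\neg(p\to q)\to(p\multimap q)$ (the converse of $\mathsf{IR}$).
   Context: $\mathcal{L}_{\multimap}$ is the propositional language built from atoms, $\top,\bot,\wedge,\vee,\to$ and a binary connective $\multimap$; $\neg\varphi:=\varphi\to\bot$, $\Box\varphi:=\top\multimap\varphi$. $\mathsf{iA}$ is the least set of formulae containing all substitution instances of intuitionistic propositional tautologies and all instances of $((\varphi\multimap\psi)\wedge(\varphi\multimap\chi))\to(\varphi\multimap(\psi\wedge\chi))$, $((\varphi\multimap\chi)\wedge(\psi\multimap\chi))\to((\varphi\vee\psi)\multimap\chi)$, $((\varphi\multimap\psi)\wedge(\psi\multimap\chi))\to(\varphi\multimap\chi)$, closed under modus ponens and the rule: from $\varphi\to\psi$ infer $\varphi\multimap\psi$. $\Lambda\oplus\Gamma$ denotes the least extension of $\Lambda\cup\Gamma$ closed under modus ponens, that rule and uniform substitution. $\mathsf{IELE}:=\mathsf{iA}\oplus\{(\varphi\to\psi)\to(\varphi\multimap\psi)\}\oplus\{(\varphi\multimap\psi)\to\neg\neg(\varphi\to\psi)\}$ (all instances). *)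

Set Implicit Arguments.

Inductive form : Type :=
| Var : nat -> form
| Top : form
| Bot : form
| And : form -> form -> form
| Or : form -> form -> form
| Imp : form -> form -> form
| Strict : form -> form -> form.

Definition Neg (a : form) : form := Imp a Bot.
Definition Box (a : form) : form := Strict Top a.

Fixpoint subst (s : nat -> form) (a : form) : form :=
  match a with
  | Var n => s n
  | Top => Top
  | Bot => Bot
  | And a b => And (subst s a) (subst s b)
  | Or a b => Or (subst s a) (subst s b)
  | Imp a b => Imp (subst s a) (subst s b)
  | Strict a b => Strict (subst s a) (subst s b)
  end.

(* Closed under modus ponens (in the inductive below),
   these generate exactly the substitution instances of intuitionistic
   propositional tautologies. *)
Inductive ipc_axiom : form -> Prop :=
| ipc_K a b : ipc_axiom (Imp a (Imp b a))
| ipc_S a b c :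
    ipc_axiom (Imp (Imp a (Imp b c)) (Imp (Imp a b) (Imp a c)))
| ipc_and1 a b : ipc_axiom (Imp (And a b) a)
| ipc_and2 a b : ipc_axiom (Imp (And a b) b)
| ipc_andI a b : ipc_axiom (Imp a (Imp b (And a b)))
| ipc_or1 a b : ipc_axiom (Imp a (Or a b))
| ipc_or2 a b : ipc_axiom (Imp b (Or a b))
| ipc_orE a b c :
    ipc_axiom (Imp (Imp a c) (Imp (Imp b c) (Imp (Or a b) c)))
| ipc_bot a : ipc_axiom (Imp Bot a)
| ipc_top : ipc_axiom Top.

(* IELE := iA (+) {(phi -> psi) -> (phi -o psi)} (+) {(phi -o psi) -> ~~(phi -> psi)}:
   the least set containing the iA axioms and the two extra schemes,
   closed under modus ponens, the rule (phi -> psi)/(phi -o psi), and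
   uniform substitution. *)
Inductive IELE : form -> Prop :=
| IELE_ipc a : ipc_axiom a -> IELE a
| IELE_conj a b c :
    IELE (Imp (And (Strict a b) (Strict a c)) (Strict a (And b c)))
| IELE_disj a b c :
    IELE (Imp (And (Strict a c) (Strict b c)) (Strict (Or a b) c))
| IELE_trans a b c :
    IELE (Imp (And (Strict a b) (Strict b c)) (Strict a c))
| IELE_CS a b : IELE (Imp (Imp a b) (Strict a b))
| IELE_IR a b : IELE (Imp (Strict a b) (Neg (Neg (Imp a b))))
| IELE_mp a b : IELE (Imp a b) -> IELE a -> IELE b
| IELE_nec a b : IELE (Imp a b) -> IELE (Strict a b)
| IELE_subst s a : IELE a -> IELE (subst s a).

From Stdlib Require Import Lia PeanoNat.

(* IELE is sound for intuitionistic Kripke frames (W, <=)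
   carrying a second relation R that interprets the strict implication
   phi -o psi ("psi holds at every R-successor forcing phi"), provided
     - R is contained in <= and is persistent ( w <= w' R v  implies  w R v ),
     - every <=-successor v of w lies below some u all of whose
       <=-successors are R-successors of w (this validates the axiom IR). *)

Section KripkeSemantics.

Variable W : Type.
Variable le : W -> W -> Prop.
Variable R : W -> W -> Prop.

Hypothesis le_refl : forall w, le w w.
Hypothesis le_trans : forall u v w, le u v -> le v w -> le u w.
Hypothesis R_pers : forall w w' v, le w w' -> R w' v -> R w v.
Hypothesis R_le : forall w v, R w v -> le w v.
Hypothesis R_max :
  forall w v, le w v -> exists u, le v u /\ forall x, le u x -> R w x.

Fixpoint force (V : nat -> W -> Prop) (w : W) (a : form) : Prop :=
  match a with
  | Var n => V n w
  | Top => True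
  | Bot => False
  | And a b => force V w a /\ force V w b
  | Or a b => force V w a \/ force V w b
  | Imp a b => forall v, le w v -> force V v a -> force V v b
  | Strict a b => forall v, R w v -> force V v a -> force V v b
  end.

Definition persistent (V : nat -> W -> Prop) : Prop :=
  forall n w v, le w v -> V n w -> V n v.

Lemma force_persistent V :
  persistent V -> forall a w v, le w v -> force V w a -> force V v a.
Proof.
  intros HV a; induction a; simpl; intros w v Hwv H; eauto.
  - destruct H; split; eauto.
  - destruct H; [left | right]; eauto.
Qed.

Lemma force_subst V s a w :
  force V w (subst s a) <-> force (fun n w => force V w (s n)) w a.
Proof.
  revert w; induction a; simpl; intros w; try tauto.
  - rewrite IHa1, IHa2; tauto.
  - rewrite IHa1, IHa2; tauto.
  - split; intros H v Hv; specialize (H v Hv); rewrite ?IHa1, ?IHa2 in *; tauto.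
  - split; intros H v Hv; specialize (H v Hv); rewrite ?IHa1, ?IHa2 in *; tauto.
Qed.

Lemma ipc_axiom_valid a :
  ipc_axiom a -> forall V, persistent V -> forall w, force V w a.
Proof.
  intros Hax V HV w; destruct Hax; simpl.
  - intros v Hv Ha x Hx _; eapply force_persistent; eauto.
  - intros v Hv Habc x Hx Hab y Hy Ha; apply (Habc y); eauto.
  - intros v Hv [Ha Hb]; exact Ha.
  - intros v Hv [Ha Hb]; exact Hb.
  - intros v Hv Ha x Hx Hb; split; [eapply force_persistent; eauto | exact Hb].
  - intros v Hv Ha; left; exact Ha.
  - intros v Hv Hb; right; exact Hb.
  - intros v Hv Hac x Hx Hbc y Hy [Ha | Hb]; eauto.
  - intros v _ [].
  - exact I.
Qed.

Theorem IELE_sound a :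
  IELE a -> forall V, persistent V -> forall w, force V w a.
Proof.
  induction 1; intros V HV w.
  - eapply ipc_axiom_valid; eauto.
  - simpl; intros v _ [Hab Hac] x Hx Ha; split; eauto.
  - simpl; intros v _ [Hac Hbc] x Hx [Ha | Hb]; eauto.
  - simpl; intros v _ [Hab Hbc] x Hx Ha; apply Hbc; eauto.
  - simpl; intros v _ Hab x Hx Ha; apply (Hab x); auto.
  - (* IR: push x into the R-cone of v, where a -> b must hold. *)
    simpl; intros v _ Hab x Hx Hnot.
    destruct (R_max _ _ Hx) as [u [Hxu Hcone]].
    apply (Hnot u Hxu); intros y Hy Ha; apply (Hab y); auto.
  - exact (IHIELE1 V HV w w (le_refl w) (IHIELE2 V HV w)).
  - simpl; intros v Hv Ha; exact (IHIELE V HV v v (le_refl v) Ha).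
  - apply force_subst, IHIELE.
    intros n x y Hxy Hn; eapply force_persistent; eauto.
Qed.

End KripkeSemantics.

Arguments force {W} le R V w a.
Arguments persistent {W} le V.

Inductive chain3 : Type := A | B | C.

Definition rank (x : chain3) : nat :=
  match x with A => 0 | B => 1 | C => 2 end.

Definition le3 (x y : chain3) : Prop := rank x <= rank y.

Definition R1 (x y : chain3) : Prop :=
  match x, y with A, A => True | _, C => True | _, _ => False end.
Definition R2 (x y : chain3) : Prop :=
  match x, y with A, B => True | _, C => True | _, _ => False end.

Ltac chain3_cases :=
  repeat match goal with x : chain3 |- _ => destruct x end;
  unfold le3, R1, R2 in *; simpl in *; try tauto; try lia.

Lemma chain3_sound (R : chain3 -> chain3 -> Prop) :
  (forall w, R w C) ->
  (forall w v, R w v -> le3 w v) ->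
  (forall w w' v, le3 w w' -> R w' v -> R w v) ->
  forall a, IELE a -> forall V, persistent le3 V -> forall w, force le3 R V w a.
Proof.
  intros Rtop Rle Rpers a Ha; apply (@IELE_sound chain3 le3 R);
    auto; unfold le3.
  - intros w; lia.
  - intros u v w; lia.
  - intros w v _; exists C; split.
    + destruct v; simpl; lia.
    + intros x Hx; destruct x; simpl in Hx; try lia; apply Rtop.
Qed.

Lemma R1_sound {a : form} :
  IELE a -> forall {V}, persistent le3 V -> forall w, force le3 R1 V w a.
Proof. apply chain3_sound; intros; chain3_cases. Qed.

Lemma R2_sound {a : form} :
  IELE a -> forall {V}, persistent le3 V -> forall w, force le3 R2 V w a.
Proof. apply chain3_sound; intros; chain3_cases. Qed.

Definition two_atoms (p : nat) (P Q : chain3 -> Prop) (n : nat) : chain3 -> Prop :=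
  if Nat.eqb n p then P else Q.

Lemma two_atoms_persistent p {P Q : chain3 -> Prop} :
  (forall x y, le3 x y -> P x -> P y) -> (forall x y, le3 x y -> Q x -> Q y) ->
  persistent le3 (two_atoms p P Q).
Proof. intros HP HQ n x y Hxy; unfold two_atoms; destruct (Nat.eqb n p); eauto. Qed.

Lemma two_atoms_p p P Q : two_atoms p P Q p = P.
Proof. unfold two_atoms; now rewrite Nat.eqb_refl. Qed.

Lemma two_atoms_q p q P Q : p <> q -> two_atoms p P Q q = Q.
Proof.
  intro hpq; unfold two_atoms.
  replace (Nat.eqb q p) with false by (symmetry; apply Nat.eqb_neq; congruence).
  reflexivity.
Qed.

Definition above_B (w : chain3) : Prop := match w with A => False | _ => True end.
Definition only_C (w : chain3) : Prop := match w with C => True | _ => False end.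
Definition everywhere (w : chain3) : Prop := True.

Lemma above_B_up x y : le3 x y -> above_B x -> above_B y.
Proof. chain3_cases. Qed.
Lemma only_C_up x y : le3 x y -> only_C x -> only_C y.
Proof. chain3_cases. Qed.
Lemma everywhere_up x y : le3 x y -> everywhere x -> everywhere y.
Proof. chain3_cases. Qed.

(* Box fails: with p on {B, C} and q on {C}, A forces p -o q in frame R1
   (R1(A) = {A, C}) but not Box (p -> q), as A R1 A and B refutes p -> q. *)
Lemma Box_refuted {p q : nat} : p <> q ->
  ~ force le3 R1 (two_atoms p above_B only_C) A
      (Imp (Strict (Var p) (Var q)) (Box (Imp (Var p) (Var q)))).
Proof.
  intros hpq H; simpl in H; rewrite two_atoms_p, two_atoms_q in H by exact hpq.
  assert (strict_pq : forall v, R1 A v -> above_B v -> only_C v)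
    by (intros v; chain3_cases).
  apply (H A (le_n 0) strict_pq A I I B); chain3_cases.
Qed.

(* Hug fails: same valuation in frame R2 (R2(A) = {B, C}); A forces
   p -> Box q since p only holds at B and C, whose R2-cone is {C}, but
   A R2 B with p true and q false at B. *)
Lemma Hug_refuted {p q : nat} : p <> q ->
  ~ force le3 R2 (two_atoms p above_B only_C) A
      (Imp (Imp (Var p) (Box (Var q))) (Strict (Var p) (Var q))).
Proof.
  intros hpq H; simpl in H; rewrite two_atoms_p, two_atoms_q in H by exact hpq.
  assert (p_box_q : forall v, le3 A v -> above_B v -> forall x, R2 v x -> True -> only_C x)
    by (intros v; chain3_cases; intros x; chain3_cases).
  exact (H A (le_n 0) p_box_q B I I).
Qed.

(* The converse of IR fails: with p everywhere and q on {C} in frame R2,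
   every world sees C, where p -> q holds, so ~~(p -> q) holds at A; yet
   A R2 B refutes p -o q. *)
Lemma converse_IR_refuted {p q : nat} : p <> q ->
  ~ force le3 R2 (two_atoms p everywhere only_C) A
      (Imp (Neg (Neg (Imp (Var p) (Var q)))) (Strict (Var p) (Var q))).
Proof.
  intros hpq H; simpl in H; rewrite two_atoms_p, two_atoms_q in H by exact hpq.
  refine (H A (le_n 0) _ B I I).
  intros v Hv Hneg; apply (Hneg C); [chain3_cases |].
  intros x Hx _; chain3_cases.
Qed.

Theorem proposition3p10 (p q : nat) (hpq : p <> q) :
  ~ IELE (Imp (Strict (Var p) (Var q)) (Box (Imp (Var p) (Var q)))) /\
  ~ IELE (Imp (Imp (Var p) (Box (Var q))) (Strict (Var p) (Var q))) /\
  ~ IELE (Imp (Neg (Neg (Imp (Var p) (Var q)))) (Strict (Var p) (Var q))).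
Proof.
  pose proof (two_atoms_persistent p above_B_up only_C_up) as V_pers_p_above_B.
  pose proof (two_atoms_persistent p everywhere_up only_C_up) as V_pers_p_everywhere.
  split; [| split]; intro Hthm.
  - exact (Box_refuted hpq (R1_sound Hthm V_pers_p_above_B A)).
  - exact (Hug_refuted hpq (R2_sound Hthm V_pers_p_above_B A)).
  - exact (converse_IR_refuted hpq (R2_sound Hthm V_pers_p_everywhere A)).
Qed.
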